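(* Let $D=(V,E)$ be a finite connected graph with weights $\mathbf c_e\ge1$, and let $H$ be a positive height function on $D$. Let $h$ be drawn randomly among height functions with $|h|=H$, with probabilities proportional to $W(h)$ (resp. among those additionally satisfying $\mathrm{sign}(h)=+1$ on a given $S\subset V$). Let $B$ be an independent Bernoulli percolation with parameters $p_e=1-1/\mathbf c_e$ and $\omega$ the percolation defined from $(h,B)$ as below. Then: (1) the marginal law of $\omega$ is ${\sf P}^D_{\rm FK}[\,\cdot\mid E_{\rm fix}(H)\subset\omega]$ (resp. ${\sf P}^{D,+}_{\rm FK}[\,\cdot\mid E_{\rm fix}(H)\subset\omega]$, wired on $S$); (2) given $H$ and $\omega$, the conditional law of $\mathrm{sign}(h)$ is constant on each connected component of $(V,\omega)$, with independent fair coin flips on different components (resp. except that the sign is $+1$ on components intersecting $S$).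
   Context: $\mathbb Z_{\rm odd}=2\mathbb Z+1$. A height function on $D$ is $h:V\to\mathbb Z_{\rm odd}$ with $|h(v)-h(w)|\le2$ for all edges $\langle v,w\rangle$; it is positive if $h>0$. Weight: $W(h)=\prod_{e=\langle v,w\rangle\in E}\mathbf c_e^{\mathbb 1\{h(v)=h(w)\}}$. Fixed-sign edges: $E_{\rm fix}(H)=\{\langle v,w\rangle\in E:\max(H(v),H(w))\ge3\}$. Percolations: $B\in\{0,1\}^E$ has independent coordinates with $B_e=1$ with probability $p_e=1-1/\mathbf c_e$, independent of $h$; $\omega_{\langle v,w\rangle}=1$ if $\max(|h(v)|,|h(w)|)\ge3$, $\omega_{\langle v,w\rangle}=B_{\langle v,w\rangle}$ if $h(v)=h(w)\in\{\pm1\}$, and $\omega_{\langle v,w\rangle}=0$ if $\{h(v),h(w)\}=\{-1,1\}$. FK-Ising: ${\sf P}^D_{\rm FK}[\varpi]\propto 2^{c(\varpi)}\prod_{e}p_e^{\mathbb 1\{e\in\varpi\}}(1-p_e)^{\mathbb 1\{e\notin\varpi\}}$ for $\varpi\subset E$, with $c(\varpi)$ the number of connected components of $(V,\varpi)$; ${\sf P}^{D,+}_{\rm FK}$ (wired on $S$) is the same model on the graph where all vertices of $S$ are identified. *)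

From HB Require Import structures.
From mathcomp Require Import all_boot all_order all_algebra.
Set Implicit Arguments. Unset Strict Implicit. Unset Printing Implicit Defensive.
Import Order.TTheory GRing.Theory Num.Theory.
Local Open Scope ring_scope.

Section Graph.
Variables (V E : finType) (src dst : E -> V).

Definition endsb (e : E) (x y : V) : bool :=
  ((src e == x) && (dst e == y)) || ((src e == y) && (dst e == x)).

Definition simple_graph : Prop :=
  (forall e, src e != dst e) /\
  (forall e e', endsb e' (src e) (dst e) -> e = e').

Definition adj : rel V := fun x y => [exists e, endsb e x y].
Definition connected_graph : Prop := forall x y, connect adj x y.

Definition open_adj (w : {set E}) : rel V := fun x y => [exists e in w, endsb e x y].
Definition oconn (w : {set E}) : rel V := connect (open_adj w).

Definition ncomp (w : {set E}) : nat := #|[set [set y | oconn w x y] | x : V]|.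

Definition touchS (S : {set V}) (w : {set E}) (x : V) : bool :=
  [exists s in S, oconn w x s].

(* connectivity after identifying all vertices of S *)
Definition wconn (S : {set V}) (w : {set E}) : rel V :=
  fun x y => oconn w x y || (touchS S w x && touchS S w y).

Definition ncomp_wired (S : {set V}) (w : {set E}) : nat :=
  #|[set [set y | wconn S w x y] | x : V]|.

Definition is_height (h : V -> int) : bool :=
  [forall v, odd `|h v|%N] && [forall e, `|h (src e) - h (dst e)| <= 2].
Definition positive_height (H : V -> int) : bool :=
  is_height H && [forall v, 0 < H v].

(* the function with |h| = H and sign(h) = sigma  (true = +1) *)
Definition signed (H : V -> int) (sigma : {ffun V -> bool}) : V -> int :=
  fun v => if sigma v then H v else - H v.

Definition E_fix (H : V -> int) : {set E} :=
  [set e | 3 <= Num.max (H (src e)) (H (dst e))].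

Definition omega (H : V -> int) (sigma : {ffun V -> bool}) (B : {set E}) : {set E} :=
  [set e | let a := signed H sigma (src e) in let b := signed H sigma (dst e) in
           if 3 <= Num.max `|a| `|b| then true
           else if (a == b) && (`|a| == 1) then e \in B
           else false].

(* law of sign(h) given omega: independent fair coin per component,
   i.e. uniform over sign assignments constant on components, and +1 on
   components meeting S *)
Definition coin_set (S : {set V}) (w : {set E}) : {set {ffun V -> bool}} :=
  [set sigma : {ffun V -> bool} |
     [forall x, forall y, oconn w x y ==> (sigma x == sigma y)] &&
     [forall x, touchS S w x ==> sigma x]].

Variable R : realFieldType.

Definition coin_law (S : {set V}) (w : {set E}) (sigma : {ffun V -> bool}) : R :=
  if sigma \in coin_set S w then (#|coin_set S w|%:R)^-1 else 0.

Definition pe (c : E -> R) (e : E) : R := 1 - (c e)^-1.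

Definition bern_w (p : E -> R) (B : {set E}) : R :=
  \prod_(e : E) (if e \in B then p e else 1 - p e).

Definition FK_weight (nc : {set E} -> nat) (p : E -> R) (w : {set E}) : R :=
  2%:R ^+ nc w * bern_w p w.
Definition FK_prob nc p (w : {set E}) : R :=
  FK_weight nc p w / \sum_(w' : {set E}) FK_weight nc p w'.
Definition FK_event_prob nc p (A : {set E}) : R :=
  \sum_(w' : {set E} | A \subset w') FK_prob nc p w'.
Definition FK_cond nc p (A : {set E}) (w : {set E}) : R :=
  (if A \subset w then FK_prob nc p w else 0) / FK_event_prob nc p A.

Definition W (c : E -> R) (h : V -> int) : R :=
  \prod_(e : E) (if h (src e) == h (dst e) then c e else 1).

Definition admissible (H : V -> int) (S : {set V}) (sigma : {ffun V -> bool}) : bool :=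
  is_height (signed H sigma) && [forall v in S, sigma v].

Definition joint_w c H S sigma B : R :=
  (if admissible H S sigma then W c (signed H sigma) else 0) * bern_w (pe c) B.
Definition joint_Z c H S : R :=
  \sum_(sigma : {ffun V -> bool}) \sum_(B : {set E}) joint_w c H S sigma B.
Definition joint_prob c H S sigma B : R := joint_w c H S sigma B / joint_Z c H S.

Definition omega_law c H S (w : {set E}) : R :=
  \sum_(sigma : {ffun V -> bool}) \sum_(B : {set E})
     (if omega H sigma B == w then joint_prob c H S sigma B else 0).
Definition sign_omega_law c H S (sigma : {ffun V -> bool}) (w : {set E}) : R :=
  \sum_(B : {set E}) (if omega H sigma B == w then joint_prob c H S sigma B else 0).

End Graph.

(* Since H is odd and positive with |H(v) - H(w)| <= 2 along edges, sign(h) can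
   change only across an edge with H = 1 at both ends, i.e. outside E_fix(H);
   there omega is B where the sign does not change and closed where it does.
   Summing the joint weight of (sign(h), B) over B edge by edge, the law of
   (sign(h), omega) is proportional to
     [E_fix(H) <= omega] [sign(h) constant on omega-clusters, + on S]
       * prod_{e in omega \ E_fix(H)} (c_e - 1).
   Conditionally on omega the sign is thus uniform among the admissible cluster
   patterns, whose number is 2^(#clusters) (half of it when the clusters meeting
   a nonempty S are wired), and the FK weight of omega is proportional to the
   same function of omega; two probability laws proportional to the same
   function coincide. *)

From HB Require Import structures.
From mathcomp Require Import all_boot all_order all_algebra.
From mathcomp Require Import zify ring.
Set Implicit Arguments. Unset Strict Implicit. Unset Printing Implicit Defensive.
Import Order.TTheory GRing.Theory Num.Theory.
Local Open Scope ring_scope.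

Section ClassConstant.
Variables (T : finType) (r : rel T).

Definition class_const : {set {ffun T -> bool}} :=
  [set sigma : {ffun T -> bool} | [forall x, forall y, r x y ==> (sigma x == sigma y)]].

Lemma class_constP (sigma : {ffun T -> bool}) :
  reflect (forall x y, r x y -> sigma x = sigma y) (sigma \in class_const).
Proof.
rewrite inE; apply: (iffP forallP) => [rc x y rxy | rc x].
  by move/forallP: (rc x) => /(_ y) /implyP /(_ rxy) /eqP.
by apply/forallP => y; apply/implyP => /rc ->.
Qed.

Hypotheses (r_refl : reflexive r) (r_sym : symmetric r) (r_trans : transitive r).

Let classes := [set [set y | r x y] | x : T].

Lemma class_eq x y : r x y -> [set z | r x z] = [set z | r y z].
Proof.
move=> rxy; apply/setP => z; rewrite !inE.
by apply/idP/idP => [|/(r_trans rxy)//]; apply: r_trans; rewrite r_sym.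
Qed.

(* A class-constant pattern is a function on the classes, encoded as a function
   on {set T} vanishing off [classes]. *)
Lemma card_class_const : #|class_const| = (2 ^ #|classes|)%N.
Proof.
pose on_classes (sigma : {ffun T -> bool}) : {ffun {set T} -> bool} :=
  [ffun A : {set T} => [exists x in A, sigma x] && (A \in classes)].
have on_classesE sigma x : sigma \in class_const ->
    on_classes sigma [set y | r x y] = sigma x.
  move=> /class_constP sc; rewrite ffunE imset_f // andbT.
  apply/existsP/idP => [[y /andP[]]|]; first by rewrite inE => /sc ->.
  by exists x; rewrite inE r_refl.
rewrite -card_bool -(card_pffun_on false classes {: bool}).
rewrite -(card_in_imset (f := on_classes)) => [|s1 s2 s1c s2c s12]; last first.
  by apply/ffunP => x; rewrite -(on_classesE s1) // -(on_classesE s2) // s12.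
apply: eq_card => f; apply/imsetP/pffun_onP => [[s sc ->] | [sup _]].
  split=> //; apply/subsetP => A; rewrite !inE ffunE.
  by case: (A \in classes); rewrite ?andbT ?andbF.
exists [ffun x => f [set y | r x y]].
  by apply/class_constP => x y rxy; rewrite !ffunE (class_eq rxy).
apply/ffunP => A; rewrite ffunE; case Acl: (A \in classes); last first.
  rewrite andbF; apply/negbTE/negP => fA.
  by move: (subsetP sup A); rewrite !inE Acl fA => /(_ isT).
case/imsetP: Acl => a _ ->; rewrite andbT.
apply/idP/existsP => [fa|[x /andP[]]]; first by exists a; rewrite inE r_refl ffunE.
by rewrite inE ffunE => rax; rewrite (class_eq rax).
Qed.

End ClassConstant.

Lemma bigA_distr_set (R : comPzSemiRingType) (I : finType) (F : I -> bool -> R) :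
  \prod_(i : I) \sum_(b : bool) F i b = \sum_(B : {set I}) \prod_(i : I) F i (i \in B).
Proof.
rewrite bigA_distr_bigA (reindex (fun f : {ffun I -> bool} => [set x | f x])) /=.
  by apply: eq_bigr => f _; apply: eq_bigr => i _; rewrite inE.
exists (fun B : {set I} => [ffun x => x \in B]) => [f _ | B _].
  by apply/ffunP => x; rewrite ffunE inE.
by apply/setP => x; rewrite inE ffunE.
Qed.

Lemma prod_if0 (R : comPzSemiRingType) (I : finType) (P : pred I) (F : I -> R) :
  \prod_(i : I) (if P i then F i else 0) =
  if [forall i, P i] then \prod_(i : I) F i else 0.
Proof.
case: ifP => [/forallP allP|/negbT]; first by apply: eq_bigr => i _; rewrite allP.
by rewrite negb_forall => /existsP [i Pi]; rewrite (bigD1 i) //= (negbTE Pi) mul0r.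
Qed.

Lemma proportional_laws_eq (R : fieldType) (T : finType) (mu nu f : T -> R) (a b : R) :
  (forall t, mu t = a * f t) -> (forall t, nu t = b * f t) ->
  \sum_t mu t = 1 -> \sum_t nu t = 1 -> mu =1 nu.
Proof.
move=> muE nuE mu1 nu1 t.
have sum_muE : a * \sum_t f t = 1 by rewrite mulr_sumr -mu1; apply: eq_bigr.
have sum_nuE : b * \sum_t f t = 1 by rewrite mulr_sumr -nu1; apply: eq_bigr.
have f_neq0 : \sum_t f t != 0.
  by apply: contra_eq_neq sum_muE => ->; rewrite mulr0 eq_sym oner_eq0.
by rewrite muE nuE (mulIf f_neq0 (etrans sum_muE (esym sum_nuE))).
Qed.

Lemma sum_FK_cond (R : realFieldType) (E : finType) nc (p : E -> R) (A : {set E}) :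
  FK_event_prob nc p A != 0 -> \sum_w FK_cond nc p A w = 1.
Proof. by move=> nz; rewrite /FK_cond -mulr_suml -big_mkcond divff. Qed.

Section Clusters.
Variables (V E : finType) (src dst : E -> V).
Implicit Types (S : {set V}) (w : {set E}) (sigma : {ffun V -> bool}).

Local Notation oconn := (oconn src dst).
Local Notation touchS := (touchS src dst).
Local Notation wconn := (wconn src dst).

Lemma oconn_refl w : reflexive (oconn w).
Proof. exact: connect0. Qed.

Lemma oconn_trans w : transitive (oconn w).
Proof. exact: connect_trans. Qed.

Lemma oconn_sym w : symmetric (oconn w).
Proof.
apply: sym_connect_sym => x y.
by apply/existsP/existsP => -[e /andP[ew exy]]; exists e; rewrite ew /endsb orbC.
Qed.

Lemma touchS_oconn S w x y : touchS S w x -> oconn w x y -> touchS S w y.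
Proof.
case/existsP => s /andP[sS xs]; rewrite oconn_sym => yx.
by apply/existsP; exists s; rewrite sS (oconn_trans yx xs).
Qed.

Lemma touchS_mem S w s : s \in S -> touchS S w s.
Proof. by move=> sS; apply/existsP; exists s; rewrite sS oconn_refl. Qed.

Lemma wconn_refl S w : reflexive (wconn S w).
Proof. by move=> x; rewrite /wconn oconn_refl. Qed.

Lemma wconn_sym S w : symmetric (wconn S w).
Proof. by move=> x y; rewrite /wconn oconn_sym andbC. Qed.

Lemma wconn_trans S w : transitive (wconn S w).
Proof.
move=> y x z /orP[xy|/andP[tx ty]] /orP[yz|/andP[ty' tz]]; rewrite /wconn.
- by rewrite (oconn_trans xy yz).
- by rewrite tz (touchS_oconn ty') ?orbT // oconn_sym.
- by rewrite tx (touchS_oconn ty yz) orbT.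
- by rewrite tx tz orbT.
Qed.

Definition const_on_edges sigma w := [forall e in w, sigma (src e) == sigma (dst e)].

Lemma const_on_edgesE sigma w : const_on_edges sigma w = (sigma \in class_const (oconn w)).
Proof.
apply/forallP/class_constP => [sw x y xy | sc e]; last first.
  by apply/implyP => ew; apply/eqP/sc/connect1/existsP; exists e; rewrite ew /endsb !eqxx.
have closed_sigma : closed (open_adj src dst w) [pred z | sigma z].
  move=> u v /existsP[e /andP[ew]]; move/implyP: (sw e) => /(_ ew) /eqP same.
  by rewrite !inE; case/orP => /andP[/eqP <- /eqP <-].
by have := closed_connect closed_sigma xy; rewrite !inE.
Qed.

Lemma coin_setE S w sigma :
  (sigma \in coin_set src dst S w) = const_on_edges sigma w && [forall s in S, sigma s].
Proof.
have -> : (sigma \in coin_set src dst S w) =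
    (sigma \in class_const (oconn w)) && [forall x, touchS S w x ==> sigma x].
  by rewrite !inE.
rewrite const_on_edgesE; apply/andP/andP => -[/class_constP sc plus]; split.
- exact/class_constP.
- by apply/forallP => s; apply/implyP => /(touchS_mem w); move/forallP/(_ s)/implyP: plus.
- exact/class_constP.
apply/forallP => x; apply/implyP => /existsP[s /andP[sS xs]].
by rewrite (sc _ _ xs); move/forallP/(_ s)/implyP: plus; apply.
Qed.

Lemma touchS_set0 w x : touchS set0 w x = false.
Proof. by apply/existsP => -[s]; rewrite inE. Qed.

Lemma coin_set_free w : coin_set src dst set0 w = class_const (oconn w).
Proof.
apply/setP => sigma; rewrite coin_setE const_on_edgesE.
have no_constraint : [forall s in set0, sigma s] by apply/forallP => s; rewrite inE.
by rewrite no_constraint andbT.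
Qed.

Lemma card_coin_set_free w : #|coin_set src dst set0 w| = (2 ^ ncomp src dst w)%N.
Proof.
rewrite coin_set_free card_class_const //;
  [exact: oconn_refl | exact: oconn_sym | exact: oconn_trans].
Qed.

Lemma coin_set_wired S w s0 sigma : s0 \in S ->
  (sigma \in coin_set src dst S w) = (sigma \in class_const (wconn S w)) && sigma s0.
Proof.
move=> s0S; rewrite coin_setE const_on_edgesE.
apply/andP/andP => -[/class_constP sc plus]; split.
- apply/class_constP => x y /orP[/sc //|/andP[/existsP[s /andP[sS xs]] /existsP[s' /andP[s'S ys]]]].
  rewrite (sc _ _ xs) (sc _ _ ys).
  by move/forallP: plus => plus; rewrite (implyP (plus s) sS) (implyP (plus s') s'S).
- by move/forallP/(_ s0)/implyP: plus; apply.
- by apply/class_constP => x y xy; apply: sc; rewrite /wconn xy.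
apply/forallP => s; apply/implyP => sS; rewrite (sc s s0) //.
by rewrite /wconn !touchS_mem ?orbT.
Qed.

(* Flipping all signs is a bijection between the wired class-constant patterns
   that are + on S and those that are - on S. *)
Lemma card_coin_set_wired S w :
  (2 ^ ncomp_wired src dst S w)%N = ((if S == set0 then 1 else 2) * #|coin_set src dst S w|)%N.
Proof.
rewrite /ncomp_wired -card_class_const; [|exact: wconn_refl|exact: wconn_sym|exact: wconn_trans].
have [->|[s0 s0S]] := set_0Vmem S.
  rewrite eqxx mul1n coin_set_free; apply: eq_card => sigma; rewrite !inE.
  by apply: eq_forallb => x; apply: eq_forallb => y; rewrite /wconn touchS_set0 orbF.
have /negbTE -> : S != set0 by apply/set0Pn; exists s0.
pose flip sigma : {ffun V -> bool} := [ffun x => ~~ sigma x].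
have flipK : involutive flip by move=> sigma; apply/ffunP => x; rewrite !ffunE negbK.
have class_const_flip sigma :
    (flip sigma \in class_const (wconn S w)) = (sigma \in class_const (wconn S w)).
  apply/class_constP/class_constP => sc x y /sc; rewrite !ffunE; first exact: negb_inj.
  by move=> ->.
rewrite -(cardID [pred sigma : {ffun V -> bool} | sigma s0]) mul2n -addnn.
congr (_ + _)%N; first by apply: eq_card => sigma; rewrite (coin_set_wired _ _ s0S) !inE.
rewrite -(card_preimset _ (inv_inj flipK)); apply: eq_card => sigma.
by rewrite [in RHS]inE (coin_set_wired _ _ s0S) class_const_flip !inE ffunE andbC.
Qed.

End Clusters.

Section SignedHeights.
Variables (V E : finType) (src dst : E -> V) (H : V -> int).
Hypothesis H_pos : positive_height src dst H.
Implicit Types (sigma : {ffun V -> bool}) (S : {set V}).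

Local Notation E_fix := (E_fix src dst H).

Lemma H_gt0 v : 0 < H v.
Proof. by case/andP: H_pos => _ /forallP. Qed.

Lemma H_lipschitz e : `|H (src e) - H (dst e)| <= 2.
Proof. by case/andP: H_pos => /andP[_ /forallP]. Qed.

Lemma H_odd v : odd `|H v|%N.
Proof. by case/andP: H_pos => /andP[/forallP]. Qed.

Lemma H_1_or_ge3 v : H v = 1 \/ 3 <= H v.
Proof.
have := H_odd v; have := H_gt0 v.
by case: (H v) => // -[|[|[|n]]] //= _ _; [left | right].
Qed.

Lemma notin_E_fix e : e \notin E_fix -> H (src e) = 1 /\ H (dst e) = 1.
Proof.
rewrite inE; have := H_1_or_ge3 (src e); have := H_1_or_ge3 (dst e); lia.
Qed.

Lemma abs_signed sigma v : `|signed H sigma v|%N = `|H v|%N.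
Proof. by rewrite /signed; case: (sigma v); rewrite ?abszN. Qed.

Lemma norm_signed sigma v : `|signed H sigma v| = H v.
Proof. by rewrite /signed; case: (sigma v); rewrite ?normrN gtr0_norm ?H_gt0. Qed.

Lemma signed_eq sigma x y :
  (signed H sigma x == signed H sigma y) = (sigma x == sigma y) && (H x == H y).
Proof.
have := H_gt0 x; have := H_gt0 y; rewrite /signed.
by case: (sigma x); case: (sigma y) => /=; lia.
Qed.

Lemma omega_memE sigma B e :
  (e \in omega src dst H sigma B) =
  (e \in E_fix) || (sigma (src e) == sigma (dst e)) && (e \in B).
Proof.
rewrite !inE /= !norm_signed; case: ifP => // /negbT fix_e.
have [Hs Hd] : H (src e) = 1 /\ H (dst e) = 1 by apply: notin_E_fix; rewrite inE.
by rewrite signed_eq Hs Hd eqxx !andbT; case: eqP.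
Qed.

Lemma admissibleE S sigma :
  admissible src dst H S sigma =
  [forall e in E_fix, sigma (src e) == sigma (dst e)] && [forall v in S, sigma v].
Proof.
rewrite /admissible /is_height; congr (_ && _).
have -> : [forall v, odd `|signed H sigma v|%N] by apply/forallP => v; rewrite abs_signed H_odd.
apply: eq_forallb => e; rewrite inE /signed.
have := H_lipschitz e; have := H_1_or_ge3 (src e); have := H_1_or_ge3 (dst e).
by case: (sigma (src e)); case: (sigma (dst e)) => /=; lia.
Qed.

End SignedHeights.

Section JointLaw.
Variables (R : realFieldType) (V E : finType) (src dst : E -> V) (c : E -> R) (H : V -> int).
Hypotheses (c_ge1 : forall e, 1 <= c e) (H_pos : positive_height src dst H).
Implicit Types (sigma : {ffun V -> bool}) (S : {set V}) (w B : {set E}).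

Local Notation E_fix := (E_fix src dst H).
Local Notation p := (pe c).

Lemma c_gt0 e : 0 < c e.
Proof. exact: lt_le_trans ltr01 (c_ge1 e). Qed.

Definition fixed_weight : R :=
  \prod_e (if (e \in E_fix) && (H (src e) == H (dst e)) then c e else 1).

Definition open_weight w : R :=
  \prod_e (if (e \in w) && (e \notin E_fix) then c e - 1 else 1).

Lemma edge_weight sigma w e : (e \in E_fix -> sigma (src e) = sigma (dst e)) ->
  (if signed H sigma (src e) == signed H sigma (dst e) then c e else 1) *
  \sum_(b : bool) (if ((e \in E_fix) || (sigma (src e) == sigma (dst e)) && b) == (e \in w)
                   then (if b then p e else 1 - p e) else 0) =
  if ((e \in E_fix) ==> (e \in w)) && ((e \in w) ==> (sigma (src e) == sigma (dst e)))
  then (if (e \in E_fix) && (H (src e) == H (dst e)) then c e else 1) *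
       (if (e \in w) && (e \notin E_fix) then c e - 1 else 1)
  else 0.
Proof.
move=> fix_same; have cn : c e != 0 := lt0r_neq0 (c_gt0 e).
rewrite big_bool (signed_eq H_pos) /pe.
case: (boolP (e \in E_fix)) => [fix_e | /(notin_E_fix H_pos) [-> ->]] /=.
  by rewrite (fix_same fix_e) eqxx; case: (e \in w); case: eqP => _ /=; field.
by case: eqP => _; case: (e \in w) => /=; field.
Qed.

Lemma coin_set_admissible S sigma w :
  (E_fix \subset w) && (sigma \in coin_set src dst S w) =
  [&& admissible src dst H S sigma, E_fix \subset w & const_on_edges src dst sigma w].
Proof.
rewrite (admissibleE H_pos) coin_setE.
have [fix_w|] := boolP (E_fix \subset w); last by rewrite !andbF.
have [sw|] := boolP (const_on_edges src dst sigma w); last by rewrite !andbF.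
have fix_const : [forall e in E_fix, sigma (src e) == sigma (dst e)].
  apply/forallP => e; apply/implyP => /(subsetP fix_w) ew.
  by move/forallP/(_ e)/implyP: sw; apply.
by rewrite fix_const /= !andbT.
Qed.

Lemma sum_joint_omega S sigma w :
  \sum_B (if omega src dst H sigma B == w then joint_w src dst c H S sigma B else 0) =
  if (E_fix \subset w) && (sigma \in coin_set src dst S w)
  then fixed_weight * open_weight w else 0.
Proof.
rewrite coin_set_admissible /joint_w.
have [adm|_] := boolP (admissible src dst H S sigma); last first.
  by rewrite big1 // => B _; rewrite mul0r if_same.
have fix_same e : e \in E_fix -> sigma (src e) = sigma (dst e).
  by move: adm; rewrite (admissibleE H_pos) => /andP[/forallP/(_ e)/implyP fs _] /fs /eqP.
have omega_eq B : (omega src dst H sigma B == w) =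
    [forall e, ((e \in E_fix) || (sigma (src e) == sigma (dst e)) && (e \in B)) == (e \in w)].
  apply/eqP/forallP => [<- e|ew]; first by rewrite (omega_memE H_pos).
  by apply/setP => e; rewrite (omega_memE H_pos); apply/eqP.
pose edge_sum e b : R :=
  if ((e \in E_fix) || (sigma (src e) == sigma (dst e)) && b) == (e \in w)
  then (if b then p e else 1 - p e) else 0.
transitivity (W src dst c (signed H sigma) * \sum_(B : {set E}) \prod_e edge_sum e (e \in B)).
  rewrite mulr_sumr; apply: eq_bigr => B _.
  by rewrite prod_if0 -omega_eq /bern_w; case: (omega _ _ _ _ _ == w); rewrite ?mulr0.
rewrite -(@bigA_distr_set R E edge_sum) /W -big_split /= /edge_sum.
under eq_bigr => e _ do rewrite (@edge_weight sigma w e (fix_same e)).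
rewrite prod_if0 -big_split /=; congr (if _ then _ else _).
apply/forallP/andP => [cond | [/subsetP fix_w /forallP sw] e].
  have {}cond e := andP (cond e).
  split; first by apply/subsetP => e /(implyP (cond e).1).
  by apply/forallP => e; case: (cond e).
by rewrite (sw e) andbT; apply/implyP/fix_w.
Qed.

Lemma pe_ge0 e : 0 <= p e.
Proof. by rewrite subr_ge0 invf_le1 ?c_ge1 ?c_gt0. Qed.

Lemma one_sub_pe_gt0 e : 0 < 1 - p e.
Proof. by rewrite /pe opprB addrC subrK invr_gt0 c_gt0. Qed.

Lemma joint_w_ge0 S sigma B : 0 <= joint_w src dst c H S sigma B.
Proof.
apply: mulr_ge0.
  by case: ifP => // _; apply: prodr_ge0 => e _; case: ifP => _; rewrite ?ltW ?c_gt0.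
by apply: prodr_ge0 => e _; case: ifP => _; rewrite ?pe_ge0 ?ltW ?one_sub_pe_gt0.
Qed.

Lemma joint_Z_gt0 S : 0 < joint_Z src dst c H S.
Proof.
pose plus : {ffun V -> bool} := [ffun _ => true].
have plus_adm : admissible src dst H S plus.
  by rewrite (admissibleE H_pos); apply/andP; split; apply/forallP => x; rewrite !ffunE implybT.
have plus_gt0 : 0 < joint_w src dst c H S plus set0.
  rewrite /joint_w plus_adm; apply: mulr_gt0.
    by apply: prodr_gt0 => e _; case: ifP => _; rewrite ?c_gt0.
  by apply: prodr_gt0 => e _; rewrite inE one_sub_pe_gt0.
rewrite /joint_Z (bigD1 plus) //= (bigD1 set0) //= -addrA; apply: (lt_le_trans plus_gt0).
rewrite lerDl; apply: addr_ge0; apply: sumr_ge0 => x _; first exact: joint_w_ge0.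
by apply: sumr_ge0 => B _; apply: joint_w_ge0.
Qed.

Lemma sign_omega_lawE S sigma w :
  sign_omega_law src dst c H S sigma w =
  (if (E_fix \subset w) && (sigma \in coin_set src dst S w)
   then fixed_weight * open_weight w else 0) / joint_Z src dst c H S.
Proof.
rewrite -sum_joint_omega /sign_omega_law mulr_suml; apply: eq_bigr => B _.
by case: ifP; rewrite ?mul0r.
Qed.

Definition omega_weight S w : R :=
  if E_fix \subset w then #|coin_set src dst S w|%:R * open_weight w else 0.

Lemma omega_lawE S w :
  omega_law src dst c H S w = fixed_weight / joint_Z src dst c H S * omega_weight S w.
Proof.
rewrite [LHS](_ : _ = \sum_sigma sign_omega_law src dst c H S sigma w) //.
under eq_bigr do rewrite sign_omega_lawE.
rewrite -mulr_suml /omega_weight; case: ifP => fix_w /=; last by rewrite big1 ?mul0r ?mulr0.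
by rewrite -big_mkcond sumr_const -mulr_natl; ring.
Qed.

Lemma sign_omega_law_coin S sigma w :
  sign_omega_law src dst c H S sigma w =
  coin_law src dst R S w sigma * omega_law src dst c H S w.
Proof.
rewrite sign_omega_lawE omega_lawE /coin_law /omega_weight.
have [sigma_in|_] := boolP (sigma \in coin_set src dst S w); last by rewrite andbF !mul0r.
case: (E_fix \subset w); last by rewrite !mulr0 mul0r.
have card_neq0 : #|coin_set src dst S w|%:R != 0 :> R.
  by rewrite pnatr_eq0 -lt0n; apply/card_gt0P; exists sigma.
by rewrite /=; field; rewrite card_neq0 lt0r_neq0 ?joint_Z_gt0.
Qed.

Lemma sum_omega_law S : \sum_w omega_law src dst c H S w = 1.
Proof.
rewrite /omega_law exchange_big /= -(divff (lt0r_neq0 (joint_Z_gt0 S))) mulr_suml.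
apply: eq_bigr => sigma _; rewrite exchange_big mulr_suml; apply: eq_bigr => B _ /=.
by rewrite -big_mkcond /= (big_pred1 (omega src dst H sigma B)) // => w; rewrite eq_sym.
Qed.

Lemma sign_given_omega S sigma w : 0 < omega_law src dst c H S w ->
  sign_omega_law src dst c H S sigma w / omega_law src dst c H S w = coin_law src dst R S w sigma.
Proof. by move=> pos; rewrite sign_omega_law_coin mulfK // lt0r_neq0. Qed.

Lemma bern_w_open w : E_fix \subset w -> bern_w p w = bern_w p E_fix * open_weight w.
Proof.
move=> fix_w; rewrite /bern_w /open_weight -big_split; apply: eq_bigr => e _ /=.
have cn : c e != 0 := lt0r_neq0 (c_gt0 e).
case: (boolP (e \in E_fix)) => [/(subsetP fix_w) -> | _] /=; first by rewrite mulr1.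
by case: (e \in w); rewrite /pe /= ?mulr1 //; field.
Qed.

Lemma FK_cond_proportional (nc : {set E} -> nat) S d :
  (forall w, (2 ^ nc w)%N = (d * #|coin_set src dst S w|)%N) ->
  exists beta, forall w, FK_cond nc p E_fix w = beta * omega_weight S w.
Proof.
move=> nc_coin.
exists (d%:R * bern_w p E_fix / (\sum_w FK_weight nc p w) / FK_event_prob nc p E_fix) => w.
rewrite /FK_cond /FK_prob /FK_weight /omega_weight.
case: ifP => fix_w; last by rewrite mul0r mulr0.
by rewrite bern_w_open // -natrX nc_coin natrM; ring.
Qed.

Lemma omega_law_FK (nc : {set E} -> nat) S d :
  (forall w, (2 ^ nc w)%N = (d * #|coin_set src dst S w|)%N) ->
  0 < FK_event_prob nc p E_fix ->
  forall w, omega_law src dst c H S w = FK_cond nc p E_fix w.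
Proof.
move=> nc_coin event_gt0; have [beta FK_condE] := FK_cond_proportional nc_coin.
apply: proportional_laws_eq (omega_lawE S) FK_condE (sum_omega_law S) _.
exact/sum_FK_cond/lt0r_neq0.
Qed.

End JointLaw.

Unset Implicit Arguments.
Set Strict Implicit.

Theorem corollary2p5 (R : realFieldType) (V E : finType) (src dst : E -> V)
    (c : E -> R) (H : V -> int) :
  simple_graph src dst -> connected_graph src dst ->
  (forall e, 1 <= c e) -> positive_height src dst H ->
  ((0 < FK_event_prob (ncomp src dst) (pe c) (E_fix src dst H) ->
    forall w : {set E},
      omega_law src dst c H set0 w =
      FK_cond (ncomp src dst) (pe c) (E_fix src dst H) w)
   /\
   (forall (w : {set E}) (sigma : {ffun V -> bool}),
      0 < omega_law src dst c H set0 w ->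
      sign_omega_law src dst c H set0 sigma w / omega_law src dst c H set0 w =
      coin_law src dst R set0 w sigma))
  /\
  (forall S : {set V},
   (0 < FK_event_prob (ncomp_wired src dst S) (pe c) (E_fix src dst H) ->
    forall w : {set E},
      omega_law src dst c H S w =
      FK_cond (ncomp_wired src dst S) (pe c) (E_fix src dst H) w)
   /\
   (forall (w : {set E}) (sigma : {ffun V -> bool}),
      0 < omega_law src dst c H S w ->
      sign_omega_law src dst c H S sigma w / omega_law src dst c H S w =
      coin_law src dst R S w sigma)).
Proof.
move=> _ _ c_ge1 H_pos; split; last move=> S; split.
- move=> event_gt0; apply: (omega_law_FK (d := 1%N) c_ge1 H_pos _ event_gt0) => w.
  by rewrite mul1n card_coin_set_free.
- by move=> w sigma; apply: sign_given_omega.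
- move=> event_gt0; apply: (omega_law_FK c_ge1 H_pos _ event_gt0) => w.
  exact: card_coin_set_wired.
- by move=> w sigma; apply: sign_given_omega.
Qed.
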